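(* Let $q$ be a prime power, $n\geq 2$, and let $C_1=[n,k_1,d_1]_q$ and $C_2=[n,k_2,d_2]_q$ be linear codes over $\mathbb{F}_q$ with $C_2\subset C_1$ (so that the CSS construction gives an $[[n,k,d_z/d_x]]_q$ stabilizer code with $k=k_1-k_2$, $d_z\geq d_1$, $d_x\geq d_2^{\perp}$), where $d_2^{\perp}$ is the minimum distance of the Euclidean dual $C_2^{\perp}$. Suppose that $d_1\geq 2$, $d_2^{\perp}\geq 2$, and that $C_2^{\perp}$ contains at least one nonzero codeword whose $i$th coordinate is zero. Then: (i) if $C_1$ has a minimum weight codeword with nonzero $i$th coordinate, there exists an AQECC $[[n-1,k,d_z^{P_i}/d_x^{P_i}]]_q$ with $k=k_1-k_2$, $d_z^{P_i}\geq d_1-1$ and $d_x^{P_i}\geq d_2^{\perp}$; (ii) if $C_1$ has no minimum weight codeword with nonzero $i$th coordinate, there exists an AQECC $[[n-1,k,d_z^{P_i}/d_x^{P_i}]]_q$ with $k=k_1-k_2$, $d_z^{P_i}\geq d_1$ and $d_x^{P_i}\geq d_2^{\perp}\geq 2$.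
   Context: An AQECC $[[n,k,d_z/d_x]]_q$ is a $q^k$-dimensional subspace of $\mathbb{C}^{q^n}$ correcting all qudit-flip errors up to $\lfloor (d_x-1)/2\rfloor$ and all phase-shift errors up to $\lfloor (d_z-1)/2\rfloor$. CSS construction: if $C_2\subset C_1\subseteq\mathbb{F}_q^n$ are linear of dimensions $k_2<k_1$, there is an AQECC $[[n,k_1-k_2,d_z/d_x]]_q$ with $d_z=\mathrm{wt}(C_1\setminus C_2)$ and $d_x=\mathrm{wt}(C_2^{\perp}\setminus C_1^{\perp})$. *)

(* Linear codes over a finite field F (q = #|F|) are
   F-subspaces of row vectors 'rV[F]_n. *)
From HB Require Import structures.
From mathcomp Require Import all_boot all_order all_algebra all_field.
Set Implicit Arguments. Unset Strict Implicit. Unset Printing Implicit Defensive.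
Import GRing.Theory.
Local Open Scope ring_scope.

Definition wt (F : fieldType) (n : nat) (x : 'rV[F]_n) : nat :=
  #|[set i : 'I_n | x 0 i != 0]|.

Definition dotv (F : fieldType) (n : nat) (x y : 'rV[F]_n) : F :=
  \sum_(i < n) x 0 i * y 0 i.

Definition in_dual (F : fieldType) (n : nat) (C : {vspace 'rV[F]_n})
  (x : 'rV[F]_n) : Prop := forall c, c \in C -> dotv x c = 0.

Definition is_min_dist (F : fieldType) (n : nat) (C : {vspace 'rV[F]_n})
  (d : nat) : Prop :=
  (exists2 c, c \in C & (c != 0) && (wt c == d)) /\
  (forall c, c \in C -> c != 0 -> (d <= wt c)%N).

Definition is_dual_min_dist (F : fieldType) (n : nat) (C : {vspace 'rV[F]_n})
  (d : nat) : Prop :=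
  (exists c, [/\ in_dual C c, c != 0 & wt c = d]) /\
  (forall c, in_dual C c -> c != 0 -> (d <= wt c)%N).

(* Existence of an AQECC [[n,k,dz/dx]]_q obtained by the CSS construction
   from nested linear codes C2 < C1 <= F^n:  k = dim C1 - dim C2,
   wt(C1 \ C2) >= dz and wt(C2^perp \ C1^perp) >= dx. *)
Definition CSS_AQECC (F : fieldType) (n k dz dx : nat) : Prop :=
  exists C1 C2 : {vspace 'rV[F]_n},
    [/\ (C2 <= C1)%VS, C2 != C1, (\dim C1 - \dim C2)%N = k,
        (forall c, c \in C1 -> c \notin C2 -> (dz <= wt c)%N) &
        (forall c, in_dual C2 c -> ~ in_dual C1 c -> (dx <= wt c)%N)].

(** Puncture both codes at [i] by deleting the [i]-th coordinate.  A nonzero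
    codeword of [C1] loses at most one nonzero entry, so it survives when
    [d1 >= 2]; hence puncturing is injective on [C1] and the dimensions, the
    strict inclusion and [k = k1 - k2] are preserved.  A word of [C1] loses
    weight only if it is nonzero at [i], which bounds [d_z].  A word [y] in
    the dual of the punctured [C2] becomes, after re-inserting a zero at [i],
    a word of the dual of [C2] of the same weight, which bounds [d_x]. *)
From HB Require Import structures.
From mathcomp Require Import all_boot all_order all_algebra all_field.
Set Implicit Arguments. Unset Strict Implicit. Unset Printing Implicit Defensive.
Import GRing.Theory.
Local Open Scope ring_scope.

Lemma wt0 (F : fieldType) (n : nat) : wt (0 : 'rV[F]_n) = 0%N.
Proof. by apply/eqP; rewrite cards_eq0; apply/eqP/setP => k; rewrite !inE mxE eqxx. Qed.

Lemma in_dual0 (F : fieldType) (n : nat) (C : {vspace 'rV[F]_n}) : in_dual C 0.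
Proof. by move=> c _; rewrite /dotv big1 // => k _; rewrite mxE mul0r. Qed.

Section Puncture.
Variables (F : fieldType) (m : nat) (i : 'I_m.+1).

Lemma wt_col' (x : 'rV[F]_m.+1) : wt x = (wt (col' i x) + (x 0 i != 0)%R)%N.
Proof.
rewrite /wt -!sum1_card !big_mkcond (bigD1_ord i) //= addnC !inE.
by congr (_ + _)%N; rewrite [RHS]big_mkcond; apply: eq_bigr => j _; rewrite !inE mxE.
Qed.

Lemma wt_col'_pred (x : 'rV[F]_m.+1) : ((wt x).-1 <= wt (col' i x))%N.
Proof. by rewrite wt_col'; case: (x 0 i != 0); rewrite ?addn1 ?addn0 ?leq_pred. Qed.

Lemma leq_wt_col' (d : nat) (x : 'rV[F]_m.+1) :
  (d <= wt x)%N -> (x 0 i != 0 -> (d < wt x)%N) -> (d <= wt (col' i x))%N.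
Proof.
rewrite wt_col'; case: (x 0 i != 0) => [_ /(_ isT)|/= + _]; last by rewrite addn0.
by rewrite addn1 ltnS.
Qed.

Definition ext0 (y : 'rV[F]_m) : 'rV[F]_m.+1 :=
  \row_k (if unlift i k is Some j then y 0 j else 0).

Lemma ext0_at (y : 'rV[F]_m) : ext0 y 0 i = 0.
Proof. by rewrite mxE unlift_none. Qed.

Lemma col'_ext0 (y : 'rV[F]_m) : col' i (ext0 y) = y.
Proof. by apply/rowP => j; rewrite !mxE liftK. Qed.

Lemma wt_ext0 (y : 'rV[F]_m) : wt (ext0 y) = wt y.
Proof. by rewrite wt_col' col'_ext0 ext0_at eqxx addn0. Qed.

Lemma dotv_ext0 (y : 'rV[F]_m) (c : 'rV[F]_m.+1) :
  dotv (ext0 y) c = dotv y (col' i c).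
Proof.
rewrite /dotv (bigD1_ord i) //= ext0_at mul0r add0r.
by apply: eq_bigr => j _; rewrite !mxE liftK.
Qed.

Lemma css_puncture (C1 C2 : {vspace 'rV[F]_m.+1}) (dz dx : nat) :
  (C2 <= C1)%VS -> C2 != C1 -> (0 < dz)%N ->
  (forall c, c \in C1 -> c != 0 -> (dz <= wt (col' i c))%N) ->
  (forall c, in_dual C2 c -> c != 0 -> (dx <= wt c)%N) ->
  CSS_AQECC F m (\dim C1 - \dim C2) dz dx.
Proof.
move=> sC21 neC21 dz_gt0 dzP dxP.
pose f : 'Hom('rV[F]_m.+1, 'rV[F]_m) := linfun (col' i).
have fE c : f c = col' i c by rewrite lfunE.
have inj1 : (C1 :&: lker f)%VS = 0%VS.
  apply/eqP; rewrite -subv0; apply/subvP => c.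
  rewrite memv_cap memv_ker fE memv0 => /andP[cC1 /eqP fc0].
  apply/negPn/negP => /(dzP c cC1); rewrite fc0 wt0.
  by rewrite leqn0 => /eqP dz0; rewrite dz0 in dz_gt0.
have inj2 : (C2 :&: lker f)%VS = 0%VS.
  by apply/eqP; rewrite -subv0 -inj1 capvS.
have dim1 := limg_dim_eq inj1; have dim2 := limg_dim_eq inj2.
exists (f @: C1)%VS, (f @: C2)%VS; split.
- exact: limgS.
- apply: contraNneq neC21 => eq_img.
  by have [_ <-] := dimv_leqif_eq sC21; rewrite -dim1 -dim2 eq_img.
- by rewrite dim1 dim2.
- move=> _ /memv_imgP[c cC1 ->] fc_notin.
  rewrite fE; apply: dzP => //; apply: contraNneq fc_notin => ->.
  by rewrite linear0 mem0v.
- move=> y y_dual2 y_ndual1.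
  have y_neq0 : y != 0 by apply: contra_notN y_ndual1 => /eqP ->; apply: in_dual0.
  rewrite -wt_ext0; apply: dxP.
    by move=> c cC2; rewrite dotv_ext0 -fE; apply/y_dual2/memv_img.
  by apply: contraNneq y_neq0 => y0; rewrite -(col'_ext0 y) y0 linear0.
Qed.

End Puncture.

Theorem theorem6 (F : finFieldType) (n : nat) (C1 C2 : {vspace 'rV[F]_n})
  (d1 d2p : nat) (i : 'I_n) :
  (2 <= n)%N ->
  (C2 <= C1)%VS -> C2 != C1 ->
  is_min_dist C1 d1 -> is_dual_min_dist C2 d2p ->
  (2 <= d1)%N -> (2 <= d2p)%N ->
  (exists c, [/\ in_dual C2 c, c != 0 & c 0 i = 0]) ->
  ((exists2 c, c \in C1 & [&& c != 0, wt c == d1 & c 0 i != 0]) ->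
     CSS_AQECC F n.-1 (\dim C1 - \dim C2) d1.-1 d2p) /\
  (~ (exists2 c, c \in C1 & [&& c != 0, wt c == d1 & c 0 i != 0]) ->
     CSS_AQECC F n.-1 (\dim C1 - \dim C2) d1 d2p).
Proof.
case: n C1 C2 i => [|m] C1 C2 i; first by case: i.
move=> _ sC21 neC21 [_ minC1] [_ minC2] d1_ge2 _ _ /=.
split=> [_ | no_min_at_i]; apply: (css_puncture (i := i) sC21 neC21 _ _ minC2).
- by rewrite -subn1 subn_gt0.
- move=> c cC1 c_neq0; apply: leq_trans (wt_col'_pred i c).
  by rewrite -!subn1 leq_sub2r ?minC1.
- exact: ltnW d1_ge2.
- move=> c cC1 c_neq0; apply: leq_wt_col'; first exact: minC1.
  move=> ci_neq0; rewrite ltn_neqAle minC1 // andbT.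
  by apply/eqP => d1E; apply: no_min_at_i; exists c; rewrite // c_neq0 -d1E eqxx.
Qed.
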